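(* If there exists a depth assignment $d:\Sigma^n\to\Sigma$ such that (i) every pair of strings $s,t\in\Sigma^n$ with $d_s\ne d_t$ share a symbol, and (ii) the valid subgraph of $B_n$ has a Hamiltonian cycle, then that cycle $s_0,s_1,\dots,s_{N-1}$ (with $N=k^n$) corresponds to a de Bruijn sequence $s_0[0]s_1[0]\cdots s_{N-1}[0]$ of order $n$ whose discrepancy is at most $n$.
   Context: Let $k\ge 1$ be an integer, $\Sigma=\{0,1,\dots,k-1\}$ with arithmetic on symbols taken modulo $k$, and $n\ge 1$. For $s\in\Sigma^n$ write $s=s[0]\cdots s[n-1]$. The de Bruijn graph $B_n$ has node set $\Sigma^n$ and an arc $(s,t)$ iff $s[1]\cdots s[n-1]=t[0]\cdots t[n-2]$. A depth assignment is any function $d:\Sigma^n\to\Sigma$, written $s\mapsto d_s$. An arc $(s,t)$ of $B_n$ is valid (with respect to $d$) if, with $b=s[0]$ and $c=t[n-1]$, either ($b+1=c$ and $d_s=d_t$) or ($b+1=d_t$ and $c=d_s$); the valid arcs form the valid subgraph. Two strings share a symbol if some $c\in\Sigma$ occurs in both. A de Bruijn sequence of order $n$ is a circular string of length $k^n$ in which every string in $\Sigma^n$ occurs exactly once. The discrepancy of a string $w$ is the maximum over all substrings $s$ of $w$ (viewed circularly) of $\max_{a\in\Sigma}|s|_a-\min_{c\in\Sigma}|s|_c$, where $|s|_a$ is the number of occurrences of $a$ in $s$. *)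

From mathcomp Require Import all_boot.
Set Implicit Arguments. Unset Strict Implicit. Unset Printing Implicit Defensive.

Section DeBruijn.
Variables (k n : nat).
Local Notation word := (n.-tuple 'I_k).

Definition sym (s : word) (i : nat) : nat := nth 0 (map val s) i.

Definition dB_arc (s t : word) : bool :=
  drop 1 (map val s) == take n.-1 (map val t).

Definition valid_arc (d : word -> 'I_k) (s t : word) : bool :=
  dB_arc s t &&
  (let b := sym s 0 in let c := sym t n.-1 in
   (((b + 1) %% k == c) && (val (d s) == val (d t)))
   || (((b + 1) %% k == val (d t)) && (c == val (d s)))).

Definition share_symbol (s t : word) : Prop := exists c : 'I_k, (c \in s) && (c \in t).

Definition valid_ham_cycle (d : word -> 'I_k) (cyc : seq word) : Prop :=
  [/\ uniq cyc, (forall s : word, s \in cyc) & cycle (valid_arc d) cyc].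
End DeBruijn.

Definition circ_sub (w : seq nat) (i l : nat) : seq nat :=
  [seq nth 0 w ((i + j) %% size w) | j <- iota 0 l].

Definition de_bruijn (k n : nat) (w : seq nat) : Prop :=
  size w = k ^ n /\ all (fun a => a < k) w /\
  forall x : n.-tuple 'I_k,
    #|[set i : 'I_(k ^ n) | circ_sub w i n == map val x]| = 1.

Definition discrepancy_le (k : nat) (w : seq nat) (D : nat) : Prop :=
  forall i l, i < size w -> l <= size w ->
  forall a c : 'I_k,
    (count_mem (val a) (circ_sub w i l) <= count_mem (val c) (circ_sub w i l) + D)%N.

From mathcomp Require Import all_boot zify.

Set Implicit Arguments.
Unset Strict Implicit.
Unset Printing Implicit Defensive.

(* For a predicate P on symbols, weigh a node s by the number of its symbols in
   P plus [d_s \in P].  Along a valid arc s -> t emitting b = s[0], the symbols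
   of t together with d_t are those of s together with d_s, with b replaced by
   b + 1; hence weight t + P b = weight s + P (b + 1).  If P is the cyclic
   interval (c, a], then P b - P (b + 1) = [b = a] - [b = c], so along any walk
   in the valid subgraph, |window|_a - |window|_c telescopes to the difference
   of the weights of the two end nodes.  Weights lie in [0, n + 1], and the
   extreme difference n + 1 would need end nodes sharing neither a symbol nor
   their depth.  The de Bruijn property holds since n consecutive emitted
   symbols spell the node at which they start, and a Hamiltonian cycle visits
   every node once. *)

Lemma sym_lt (k n : nat) (s : n.-tuple 'I_k) j : 0 < k -> sym s j < k.
Proof.
move=> k_gt0; rewrite /sym; case: (ltnP j (size (map val s))) => j_lt.
  by rewrite (nth_map (Ordinal k_gt0)) ?ltn_ord // -(size_map val).
by rewrite nth_default.
Qed.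

Lemma dB_arc_sym (k n : nat) (s t : n.-tuple 'I_k) j :
  dB_arc s t -> j < n.-1 -> sym s j.+1 = sym t j.
Proof. by move=> /eqP st j_lt; rewrite /sym -add1n -nth_drop st nth_take. Qed.

Section Weight.
Variables (k n : nat) (d : n.-tuple 'I_k -> 'I_k).
Local Notation word := (n.-tuple 'I_k).

Definition weight (P : pred nat) (s : word) : nat := count P (map val s) + P (val (d s)).

Lemma count_val_le P (s : word) : count P (map val s) <= n.
Proof. by rewrite -[n in _ <= n](size_tuple s) -(size_map val) count_size. Qed.

Lemma weight_le P s : weight P s <= n.+1.
Proof. by rewrite /weight -addn1 leq_add ?leq_b1 ?count_val_le. Qed.

Lemma valid_arc_weight P s t : 0 < n -> valid_arc d s t ->
  weight P t + P (sym s 0) = weight P s + P ((sym s 0 + 1) %% k).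
Proof.
move=> n_gt0 /andP[/eqP st valid].
have size_val (u : word) : size (map val u) = n by rewrite size_map size_tuple.
have s_head : map val s = sym s 0 :: drop 1 (map val s).
  by rewrite /sym -(drop_nth 0) ?drop0 ?size_val.
have t_last : map val t = rcons (take n.-1 (map val t)) (sym t n.-1).
  rewrite /sym -take_nth ?size_val; last lia.
  by rewrite prednK // take_oversize ?size_val.
rewrite /weight {1}s_head t_last -st -cats1 count_cat /=.
by move: valid => /= /orP[] /andP[/eqP -> /eqP ->]; lia.
Qed.

Hypothesis d_share : forall s t : word, d s != d t -> share_symbol s t.

Lemma weight_gap P s t : weight P s <= weight P t + n.
Proof.
have := weight_le P s; rewrite leq_eqVlt ltnS => /orP[/eqP s_full | s_lt]; last first.
  by rewrite (leq_trans s_lt) ?leq_addl.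
have [count_s P_ds] : count P (map val s) = n /\ P (val (d s)).
  by move: s_full (count_val_le P s); rewrite /weight; case: (P _) => /=; split => //; lia.
suff : 0 < weight P t by lia.
case: (eqVneq (d s) (d t)) => [ds_dt | /d_share[c /andP[cs ct]]].
  by rewrite /weight -ds_dt P_ds addn1.
have /allP all_s : all P (map val s) by rewrite all_count count_s size_map size_tuple.
apply: leq_trans (leq_addr _ _); rewrite -has_count.
by apply/hasP; exists (val c); [exact: map_f | apply: all_s; exact: map_f].
Qed.

End Weight.

Definition cyc_interval (c a : nat) : pred nat :=
  fun x => if c < a then (c < x) && (x <= a) else (c < x) || (x <= a).

Lemma cyc_interval_succ (k c a b : nat) : c < k -> a < k -> b < k -> c != a ->
  cyc_interval c a b + (b == c) = cyc_interval c a ((b + 1) %% k) + (b == a).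
Proof.
move=> c_lt a_lt b_lt c_neq_a.
have -> : (b + 1) %% k = if b.+1 < k then b.+1 else 0.
  case: ltnP => b_succ; first by rewrite addn1 modn_small.
  by rewrite addn1 (_ : b.+1 = k) ?modnn //; lia.
by rewrite /cyc_interval; case: ifP; case: ifP; lia.
Qed.

Section Walk.
Variables (k n : nat) (d : n.-tuple 'I_k -> 'I_k) (f : nat -> n.-tuple 'I_k).
Hypothesis f_valid : forall m, valid_arc d (f m) (f m.+1).

Definition label m := sym (f m) 0.

Definition window i l := [seq label (i + j) | j <- iota 0 l].

Lemma walk_sym m j : j < n -> sym (f m) j = label (m + j).
Proof.
elim: j m => [|j IHj] m j_lt; first by rewrite addn0.
have /andP[arc _] := f_valid m.
by rewrite (dB_arc_sym arc) -?addSnnS ?IHj //; lia.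
Qed.

Lemma window_word i : window i n = map val (f i).
Proof.
apply: (@eq_from_nth _ 0); first by rewrite !size_map size_iota size_tuple.
rewrite size_map size_iota => j j_lt.
by rewrite (nth_map 0) ?size_iota // nth_iota // -walk_sym.
Qed.

Lemma window_weight (c a : 'I_k) i l : 0 < n -> c != a :> nat ->
  count_mem (val a) (window i l) + weight d (cyc_interval c a) (f (i + l))
  = count_mem (val c) (window i l) + weight d (cyc_interval c a) (f i).
Proof.
move=> n_gt0 c_neq_a; set P := cyc_interval c a.
have k_gt0 : 0 < k := leq_trans (ltn0Sn a) (ltn_ord a).
have step m : weight d P (f m.+1) + (label m == a) = weight d P (f m) + (label m == c).
  have := valid_arc_weight P n_gt0 (f_valid m).
  have := cyc_interval_succ (ltn_ord c) (ltn_ord a) (sym_lt (f m) 0 k_gt0) c_neq_a.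
  by rewrite /label -/P; lia.
elim: l => [|l IHl]; first by rewrite addn0.
rewrite /window -addn1 iotaD map_cat !count_cat /= add0n -/(window i l) addn1 addnS.
by move: IHl (step (i + l)) => /=; lia.
Qed.

Hypothesis d_share : forall s t : n.-tuple 'I_k, d s != d t -> share_symbol s t.

Lemma window_discrepancy i l (a c : 'I_k) : 0 < n ->
  count_mem (val a) (window i l) <= count_mem (val c) (window i l) + n.
Proof.
move=> n_gt0; have [-> | c_neq_a] := eqVneq (val c) (val a); first exact: leq_addr.
have := window_weight i l n_gt0 c_neq_a.
have := weight_gap d_share (cyc_interval c a) (f i) (f (i + l)).
lia.
Qed.

End Walk.

Lemma cycle_nth_mod (T : Type) (e : rel T) (x0 : T) (p : seq T) m :
  cycle e p -> 0 < size p ->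
  e (nth x0 p (m %% size p)) (nth x0 p (m.+1 %% size p)).
Proof.
case: p => [//|x p] /= /(pathP x0) e_path _.
rewrite -[m.+1]addn1 -modnDml addn1; set r := m %% (size p).+1.
have r_lt : r < (size p).+1 by rewrite ltn_mod.
have := e_path r; rewrite size_rcons => /(_ r_lt).
rewrite -rcons_cons !nth_rcons /= r_lt.
case: (ltngtP r (size p)) => [lt | gt | eq].
- by rewrite (modn_small (m := r.+1)).
- by move: r_lt; rewrite ltnS leqNgt gt.
- by rewrite eq modnn.
Qed.

Theorem theorem3 (k n : nat) (d : n.-tuple 'I_k -> 'I_k) (cyc : seq (n.-tuple 'I_k)) :
  0 < k -> 0 < n ->
  (forall s t : n.-tuple 'I_k, d s != d t -> share_symbol s t) ->
  valid_ham_cycle d cyc ->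
  let w := [seq sym s 0 | s <- cyc] in
  de_bruijn k n w /\ discrepancy_le k w n.
Proof.
move=> k_gt0 n_gt0 d_share [cyc_uniq cyc_all cyc_valid] w.
pose x0 := nseq_tuple n (Ordinal k_gt0).
pose f m := nth x0 cyc (m %% size cyc).
have size_cyc : size cyc = k ^ n.
  rewrite -(card_uniqP cyc_uniq) -[in RHS](card_ord k) -card_tuple.
  by apply: eq_card => x; rewrite cyc_all.
have cyc_gt0 : 0 < size cyc by rewrite size_cyc expn_gt0 k_gt0.
have f_valid m : valid_arc d (f m) (f m.+1) by apply: cycle_nth_mod.
have w_window i l : circ_sub w i l = window f i l.
  by apply: eq_map => j; rewrite size_map (nth_map x0) ?ltn_pmod.
split; last by move=> i l _ _ a c; rewrite w_window; exact: window_discrepancy.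
split; first by rewrite size_map.
split; first by apply/allP => _ /mapP[s _ ->]; exact: sym_lt.
move=> x; have x_idx : index x cyc < k ^ n by rewrite -size_cyc index_mem.
rewrite -(cards1 (Ordinal x_idx)); apply: eq_card => i; rewrite !inE.
have i_lt : i < size cyc by rewrite size_cyc.
rewrite w_window (window_word f_valid) (inj_eq (inj_map val_inj)) /f modn_small //.
apply/eqP/eqP => [nth_i | ->]; last by rewrite /= nth_index ?cyc_all.
by apply: val_inj; rewrite /= -(val_inj nth_i) index_uniq.
Qed.
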